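(* Let $F$ be a field, $n\ge 1$, and let $T\subseteq GL_n(F)$ be a split (not necessarily maximal) torus acting on $M_n(F)$ by conjugation $a\mapsto \tau a\tau^{-1}$. Let $X(T)$ be its character group (written additively, identity $0$), $W(T,M_n)\subseteq X(T)$ the set of weights of this action, $M_\omega$ the weight space of $\omega\in W(T,M_n)$ (so $M_n(F)=\bigoplus_{\omega\in W(T,M_n)}M_\omega$ and $M_0=\{a\in M_n(F):\tau a\tau^{-1}=a\ \forall \tau\in T\}$ is the centralizer of $T$), and $\pi_\omega:M_n(F)\to M_\omega$ the corresponding projections. Let $f:X(T)\otimes_{\mathbb Z}\mathbb Q\to\mathbb Q$ be a $\mathbb Q$-linear functional with $f(\omega)\ne 0$ for all $0\ne\omega\in W(T,M_n)$, and put $W_f^+=\{\omega\in W(T,M_n): f(\omega)>0\}$. Let $\Lambda\in T$ be such that $\mathrm{Tr}(\Lambda e)\neq 0$ for every nonzero idempotent $e\in M_0$. Let $V$ be an $F$-subspace of $M_n(F)$ such that both $V$ and $\pi_0(V)$ are contained in $\Lambda^\perp=\{b\in M_n(F):\mathrm{Tr}(\Lambda b)=0\}$, and such that $\pi_\omega(V)\,\pi_{-\omega'}(V)=0$ for all $\omega,\omega'\in W_f^+$ (i.e. $xy=0$ for all $x\in\pi_\omega(V)$, $y\in \pi_{-\omega'}(V)$). Then $V$ is a Mathieu subspace of $M_n(F)$.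
   Context: Let $\mathcal A$ be an associative algebra over a field $F$. An $F$-subspace $M\subseteq\mathcal A$ is a Mathieu subspace (MS) of $\mathcal A$ if for all $a,b,c\in\mathcal A$ such that $a^m\in M$ for all $m\ge 1$, there exists $N$ (depending on $a,b,c$) such that $ba^mc\in M$ for all $m\ge N$. An idempotent is an element $e$ with $e^2=e$. For a subset $S\subseteq M_n(F)$, $S^\perp=\{b\in M_n(F):\mathrm{Tr}(bx)=0 \text{ for all } x\in S\}$. The weights of the conjugation action of a split torus on $M_n(F)$ form a set closed under $\omega\mapsto-\omega$. *)

From HB Require Import structures.
From mathcomp Require Import all_boot all_order all_algebra.
Set Implicit Arguments. Unset Strict Implicit. Unset Printing Implicit Defensive.
Import Order.TTheory GRing.Theory Num.Theory.
Local Open Scope ring_scope.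

Definition mathieu_subspace (R : pzRingType) (M : R -> Prop) : Prop :=
  forall a b c : R, (forall m : nat, (0 < m)%N -> M (a ^+ m)) ->
  exists N : nat, forall m : nat, (N <= m)%N -> M (b * a ^+ m * c).

(* A split torus T of GL_n(F) is given by P (invertible) and an integer
   matrix A (n x r) with A^T : Z^n -> Z^r surjective: T = { P diag(t^{A_i}) P^-1 }.
   Then X(T) = Z^r, and the weight of P E_ij P^-1 is row i A - row j A. *)

Definition torus_elt (F : fieldType) (n r : nat) (P : 'M[F]_n)
  (A : 'M[int]_(n, r)) (t : 'rV[F]_r) : 'M[F]_n :=
  P *m diag_mx (\row_i \prod_(j < r) (t 0 j) ^ (A i j)) *m invmx P.

Definition is_weight (n r : nat) (A : 'M[int]_(n, r)) (w : 'rV[int]_r) : Prop :=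
  exists i j : 'I_n, w = row i A - row j A.

Definition wproj (F : fieldType) (n r : nat) (P : 'M[F]_n)
  (A : 'M[int]_(n, r)) (w : 'rV[int]_r) (a : 'M[F]_n) : 'M[F]_n :=
  P *m (\matrix_(i, j) (if row i A - row j A == w
                        then (invmx P *m a *m P) i j else 0)) *m invmx P.

(* the Q-linear functional f on X(T) (x) Q = Q^r, given by a vector c *)
Definition fval (r : nat) (c : 'rV[rat]_r) (w : 'rV[int]_r) : rat :=
  \sum_(j < r) c 0 j * (w 0 j)%:~R.

Definition Wplus (n r : nat) (A : 'M[int]_(n, r)) (c : 'rV[rat]_r)
  (w : 'rV[int]_r) : Prop := is_weight A w /\ 0 < fval c w.

From HB Require Import structures.
From mathcomp Require Import all_boot all_order all_algebra.
From mathcomp Require Import ring zify.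
Import Order.TTheory GRing.Theory Num.Theory.
Local Open Scope ring_scope.
Set Implicit Arguments. Unset Strict Implicit.

(* Let a have all its positive powers in V.  By the Fitting decomposition of
   the characteristic polynomial, some polynomial e = u(a) a^N with no
   constant term lies in V, is idempotent, and vanishes only if a is
   nilpotent; so it suffices to show that every idempotent e of V is 0.
   Conjugating by P, the torus becomes diagonal and the weight space of
   entry (i, j) is indexed by row i A - row j A; the functional f orders
   the basis indices by their "level" f(row i A).  The hypothesis on V says
   that for an idempotent E, the products of its strictly lower and strictly
   upper weight components vanish.  From this, the block diagonal part d of E
   satisfies (d - d^2)^2 = 0 (lemma [detour_sqr0]); lifting d - d^2 to a
   block diagonal idempotent and using the trace condition on Lambda shows
   d^2 = 0 ([nilpotent_defect_sqr0]); an induction over levels then gives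
   E = 0 ([graded_idem_eq0]). *)

(* A square-zero matrix has trace zero, over any field (write M = L Q U with
   L, U invertible and Q a projection, and cycle the trace). *)
Lemma mxtrace_sqr0 (F : fieldType) (m : nat) (M : 'M[F]_m) :
  M *m M = 0 -> \tr M = 0.
Proof.
rewrite -(mulmx_ebase M).
set L := col_ebase M; set Q := pid_mx _; set U := row_ebase M.
have uL : L \in unitmx := col_ebase_unit M.
have uU : U \in unitmx := row_ebase_unit M.
have idQ : Q *m Q = Q by rewrite pid_mx_id // rank_leq_col.
move=> MM; have QULQ : Q *m (U *m L) *m Q = 0.
  have : invmx L *m ((L *m Q *m U) *m (L *m Q *m U)) *m invmx U = 0.
    by rewrite MM mulmx0 mul0mx.
  by rewrite !mulmxA mulVmx // mul1mx -!mulmxA mulmxV // mulmx1 !mulmxA.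
rewrite mxtrace_mulC -[Q in U *m (L *m Q)]idQ !mulmxA mxtrace_mulC.
by rewrite !mulmxA -(mulmxA Q U L) QULQ mxtrace0.
Qed.

(* Fitting decomposition inside a subspace: if all positive powers of a lie
   in V, then V contains an idempotent polynomial in a which can vanish only
   when a is nilpotent. *)
Lemma fitting_idempotent (F : fieldType) (n : nat) (V : {vspace 'M[F]_n.+1})
    (a : 'M[F]_n.+1) :
  (forall m, (0 < m)%N -> a ^+ m \in V) ->
  exists N e, [/\ e \in V, e * e = e & (e = 0 -> a ^+ N = 0)].
Proof.
move=> hV.
have inV p N : (0 < N)%N -> horner_mx a (p * 'X^N) \in V.
  elim/poly_ind: p N => [|p x IH] N hN; first by rewrite mul0r rmorph0 mem0v.
  rewrite mulrDl -mulrA -exprS mul_polyC rmorphD /= memvD ?IH //.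
  by rewrite horner_mxZ memvZ // rmorphXn /= horner_mx_X hV.
have [k [g g0 hchi]] := multiplicity_XsubC (char_poly a) 0.
rewrite subr0 in hchi.
have {}g0 : ~~ root g 0 by move: g0; rewrite monic_neq0 ?char_poly_monic.
have cop : coprimep ('X^(k.+1)) g.
  by rewrite coprimep_sym; apply: (coprimep_expr k.+1); rewrite coprimepX.
have [[u v] /= huv] := Bezout_eq1_coprimepP _ _ cop.
have chi0 p : horner_mx a (p * char_poly a) = 0.
  by rewrite rmorphM /= Cayley_Hamilton mulr0.
pose q := u * 'X^(k.+1).
have q1 : 1 - q = v * g by rewrite -huv /q; ring.
exists k.+1, (horner_mx a q); split; first exact: inV.
  apply/eqP; rewrite -subr_eq0 -rmorphM -rmorphB /=.
  have -> : q * q - q = - (u * v * 'X * char_poly a).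
    have -> : q * q - q = - (q * (1 - q)) by ring.
    by rewrite q1 hchi /q exprSr; ring.
  by rewrite rmorphN /= chi0 oppr0.
move=> e0.
have : horner_mx a ('X^(k.+1) * (q + v * g)) = 0.
  have -> : 'X^(k.+1) * (q + v * g) = 'X^(k.+1) * q + v * 'X * char_poly a.
    by rewrite hchi exprSr; ring.
  by rewrite rmorphD /= chi0 addr0 rmorphM /= e0 mulr0.
by rewrite huv mulr1 rmorphXn /= horner_mx_X.
Qed.

(* Idempotent lifting with a trace test: if a := d - d^2 squares to zero,
   then d - (1 - 2d) a is an idempotent polynomial in d; when L commutes with
   d, tr (L d) = 0 and tr (L e) <> 0 for nonzero idempotent polynomials e in
   d, that idempotent is 0, so d = (1 - 2d) a and d^2 = 0. *)
Lemma nilpotent_defect_sqr0 (F : fieldType) (m : nat) (L d : 'M[F]_m.+1) :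
  GRing.comm L d -> (d - d * d) * (d - d * d) = 0 -> \tr (L * d) = 0 ->
  (forall p, horner_mx d p * horner_mx d p = horner_mx d p ->
             horner_mx d p != 0 -> \tr (L * horner_mx d p) != 0) ->
  d * d = 0.
Proof.
move=> Ld aa trLd hL.
pose pa : {poly F} := 'X - 'X^2; pose pY : {poly F} := 1 - 'X *+ 2.
set a := d - d * d; set Y := 1 - d *+ 2.
have ha : horner_mx d pa = a by rewrite rmorphB /= rmorphXn /= horner_mx_X expr2.
have hY : horner_mx d pY = Y by rewrite rmorphB rmorphMn rmorph1 /= horner_mx_X.
have he : horner_mx d ('X - pY * pa) = d - Y * a.
  by rewrite rmorphB rmorphM /= horner_mx_X ha hY.
have Ya : GRing.comm Y a by rewrite -ha -hY; apply: comm_horner_mx2.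
have LY : GRing.comm L Y by apply: commrB; [exact: commr1 | apply: commrMn].
have La : GRing.comm L a by apply: commrB => //; apply: commrM.
have e_idem : (d - Y * a) * (d - Y * a) = d - Y * a.
  apply/eqP; rewrite -subr_eq0 -he -rmorphM -rmorphB.
  have -> : ('X - pY * pa) * ('X - pY * pa) - ('X - pY * pa) =
            pa * pa * (- (pa *+ 4) - 3%:R) by rewrite /pY /pa; ring.
  by rewrite !rmorphM /= ha aa mul0r.
have trLYa : \tr (L * (Y * a)) = 0.
  apply: mxtrace_sqr0; rewrite !mulmxE.
  have -> : L * (Y * a) * (L * (Y * a)) = L * Y * L * Y * (a * a).
    rewrite !mulrA -(mulrA (L * Y)) -La !mulrA -(mulrA (L * Y * L)) -Ya.
    by rewrite !mulrA.
  by rewrite aa mulr0.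
have d_eq : d = Y * a.
  apply/eqP; rewrite -subr_eq0; apply: contraT => ne0.
  have := hL ('X - pY * pa); rewrite he => /(_ e_idem ne0).
  by rewrite mulrBr raddfB /= trLd trLYa subr0 eqxx.
by rewrite {1}d_eq d_eq -mulrA (mulrA a) -Ya -(mulrA Y) aa !mulr0.
Qed.

Lemma sum_classes0 (T : finType) (K : eqType) (V : nmodType) (key : T -> K)
    (P : {pred T}) (G : T -> V) :
  (forall l l', key l = key l' -> P l -> P l') ->
  (forall k, P k -> \sum_(l | key l == key k) G l = 0) ->
  \sum_(l in P) G l = 0.
Proof.
move=> Pkey class0; pose cls l := [set l' | key l' == key l].
have clsE l l' : (cls l' == cls l) = (key l' == key l).
  apply/eqP/eqP => [/setP/(_ l')|e]; last by apply/setP => x; rewrite !inE e.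
  by rewrite !inE eqxx => /esym/eqP.
rewrite (partition_big_imset cls) /=; apply: big1 => _ /imsetP[k Pk ->].
rewrite -[RHS](class0 k Pk); apply: eq_bigl => l; rewrite clsE andb_idl //.
by move/eqP=> e; apply: Pkey Pk.
Qed.

Section GradedIdempotents.
Variables (F : fieldType) (n r : nat) (A : 'M[int]_(n.+1, r)) (c : 'rV[rat]_r).

(* The f-value of the weight of entry (i, j) is level i - level j. *)
Definition level (i : 'I_n.+1) : rat := fval c (row i A).

Lemma fvalB w1 w2 : fval c (w1 - w2) = fval c w1 - fval c w2.
Proof.
rewrite /fval -sumrB; apply: eq_bigr => j _.
by rewrite !mxE rmorphB /= mulrBr.
Qed.

Lemma Wplus_level i j : level j < level i -> Wplus A c (row i A - row j A).
Proof. by move=> h; split; [exists i, j | rewrite fvalB subr_gt0]. Qed.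

(* The weight-w component of X, in the diagonalizing basis. *)
Definition blk (w : 'rV[int]_r) (X : 'M[F]_n.+1) : 'M[F]_n.+1 :=
  \matrix_(i, j) (if row i A - row j A == w then X i j else 0).

Lemma blk0E X i j : blk 0 X i j = if row i A == row j A then X i j else 0.
Proof. by rewrite mxE subr_eq0. Qed.

Lemma mulmx_blk0r (X Y : 'M[F]_n.+1) i j :
  (X *m blk 0 Y) i j = \sum_(l | row l A == row j A) X i l * Y l j.
Proof.
rewrite mxE [RHS]big_mkcond; apply: eq_bigr => l _; rewrite blk0E.
by case: ifP; rewrite ?mulr0.
Qed.

Lemma mulmx_blk0l (X Y : 'M[F]_n.+1) i j :
  (blk 0 X *m Y) i j = \sum_(l | row l A == row i A) X i l * Y l j.
Proof.
rewrite mxE [RHS]big_mkcond; apply: eq_bigr => l _; rewrite blk0E eq_sym.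
by case: ifP; rewrite ?mul0r.
Qed.

(* X lies in the centralizer M_0 of the torus (in the diagonalizing basis). *)
Definition blockdiag (X : 'M[F]_n.+1) : Prop :=
  forall i j, row i A != row j A -> X i j = 0.

Lemma blockdiag_blk0 X : blockdiag (blk 0 X).
Proof. by move=> i j h; rewrite blk0E (negPf h). Qed.

Lemma blk0_id X : blockdiag X -> blk 0 X = X.
Proof.
move=> h; apply/matrixP => i j; rewrite blk0E.
by case: (eqVneq (row i A) (row j A)) => // /h ->.
Qed.

(* M_0 is a subalgebra, so it contains every polynomial in its elements. *)
Lemma blockdiag_horner X p : blockdiag X -> blockdiag (horner_mx X p).
Proof.
move=> bX; elim/poly_ind: p => [|p a IH] i j hij.
  by rewrite rmorph0 mxE.
rewrite rmorphD rmorphM /= horner_mx_X horner_mx_C !mxE.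
have /negPf-> : i != j by apply: contraNneq hij => ->.
rewrite mulr0n addr0.
apply: big1 => l _; case: (eqVneq (row i A) (row l A)) => [e|/IH->].
  by rewrite bX ?mulr0 // -e.
by rewrite mul0r.
Qed.

Hypothesis hf : forall w, is_weight A w -> w != 0 -> fval c w != 0.

(* Since f does not vanish on nonzero weights, levels separate weight classes. *)
Lemma eq_level i j : (row i A == row j A) = (level i == level j).
Proof.
apply/eqP/eqP => [e|h]; first by rewrite /level e.
apply/eqP; rewrite -subr_eq0; apply/negPn/negP => hne.
have := hf (ex_intro _ i (ex_intro _ j erefl)) hne.
by rewrite fvalB -/(level i) -/(level j) h subrr eqxx.
Qed.

Lemma eq_level_row i j : row i A = row j A -> level i = level j.
Proof. by move/eqP; rewrite eq_level => /eqP. Qed.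

Section Idempotent.
Variable E : 'M[F]_n.+1.
Hypothesis E_idem : E *m E = E.
Hypothesis E_prod : forall w w', Wplus A c w -> Wplus A c w' ->
  blk w E *m blk (- w') E = 0.

Lemma sum_class0 i j k : level k < level i -> level k < level j ->
  \sum_(l | row l A == row k A) E i l * E l j = 0.
Proof.
move=> hi hj; have /matrixP/(_ i j) := E_prod (Wplus_level hi) (Wplus_level hj).
rewrite !mxE => H; rewrite -[RHS]H [LHS]big_mkcond; apply: eq_bigr => l _.
rewrite !mxE (inj_eq (addrI _)) (inj_eq oppr_inj) opprB.
by case: (eqVneq (row l A) (row k A)) => [->|]; rewrite ?eqxx ?mul0r.
Qed.

Lemma sum_below0 i j p : level p <= level i -> level p <= level j ->
  \sum_(l | level l < level p) E i l * E l j = 0.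
Proof.
move=> hi hj; apply: (sum_classes0 (key := fun l => row l A)).
  by move=> l l' /eq_level_row <-.
by move=> k hk; apply: sum_class0; apply: lt_le_trans hk _.
Qed.

Lemma idem_entry i j p : level p <= level i -> level p <= level j ->
  E i j = \sum_(l | row l A == row p A) E i l * E l j
        + \sum_(l | level p < level l) E i l * E l j.
Proof.
move=> hi hj; rewrite -{1}E_idem mxE (bigID (fun l => level l < level p)) /=.
rewrite sum_below0 // add0r (bigID (fun l => level l == level p)) /=.
congr (_ + _); apply: eq_bigl => l; rewrite ?eq_level.
  by rewrite andb_idl // => /eqP->; rewrite ltxx.
by rewrite -leNgt lt_neqAle eq_sym andbC.
Qed.

Definition detour : 'M[F]_n.+1 := \matrix_(i, j)
  (if row i A == row j A then \sum_(l | level i < level l) E i l * E l j else 0).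

Lemma blk0_defect : blk 0 E - blk 0 E *m blk 0 E = detour.
Proof.
apply/matrixP => i j; rewrite mxE [X in _ + X]mxE mulmx_blk0l blk0E [RHS]mxE.
case: (eqVneq (row i A) (row j A)) => hij; last first.
  by rewrite big1 ?subrr // => l /eqP hl; rewrite blk0E hl (negPf hij) mulr0.
have lij := eq_level_row hij.
rewrite (idem_entry (p := i)) ?lij // addrAC.
rewrite [X in _ - X](eq_bigr (fun l => E i l * E l j)) ?subrr ?add0r //.
move=> l /eqP hl.
by rewrite blk0E hl hij eqxx.
Qed.

(* The detour squares to zero: its square passes down and then up again. *)
Lemma detour_sqr0 : detour *m detour = 0.
Proof.
apply/matrixP => i j; rewrite !mxE.
case: (eqVneq (row i A) (row j A)) => hij; last first.
  apply: big1 => k _; rewrite !mxE.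
  case: (eqVneq (row i A) (row k A)) => [hik|]; last by rewrite mul0r.
  by rewrite -hik (negPf hij) mulr0.
transitivity (\sum_(k | row k A == row i A) \sum_(l | level i < level l)
   \sum_(l' | level i < level l') (E i l * E l k * (E k l' * E l' j))).
  rewrite [RHS]big_mkcond; apply: eq_bigr => k _; rewrite !mxE.
  case: (eqVneq (row k A) (row i A)) => hk; last by rewrite mul0r.
  rewrite hk hij eqxx big_distrl /= (eq_level_row hk); apply: eq_bigr => l _.
  by rewrite big_distrr.
rewrite exchange_big /=; apply: big1 => l hl.
rewrite exchange_big /=; apply: big1 => l' hl'.
rewrite (eq_bigr (fun k => E i l * (E l k * E k l') * E l' j)); last first.
  by move=> k _; rewrite !mulrA.
by rewrite -big_distrl -big_distrr /= sum_class0 // mulr0 mul0r.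
Qed.

(* Rank of a level counted from the top, to do induction over levels. *)
Definition rho (i : 'I_n.+1) : nat := #|[set l | level i < level l]|.

Lemma rho_lt i l : level i < level l -> (rho l < rho i)%N.
Proof.
move=> h; apply: proper_card; apply/properP; split.
  by apply/subsetP => k; rewrite !inE => /(lt_trans h).
by exists l; rewrite !inE ?h ?ltxx.
Qed.

Lemma rho_ltE i l : (rho l < rho i)%N -> level i < level l.
Proof.
case: (ltgtP (level i) (level l)) => // [/rho_lt h|eil]; last by rewrite /rho eil ltnn.
by rewrite ltnNge (ltnW h).
Qed.

Lemma rho_eqE i l : rho i = rho l -> level i = level l.
Proof.
by case: (ltgtP (level i) (level l)) => // /rho_lt h e; move: h; rewrite e ltnn.
Qed.

Lemma rho_bound i : (rho i < n.+2)%N.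
Proof. by rewrite ltnS /rho (leq_trans (max_card _)) // card_ord. Qed.

(* Induction measure on entries: pairs of distinct levels come before the
   diagonal blocks of the same maximal rank. *)
Definition mu i j : nat :=
  (minn (rho i) (rho j) * n.+2 + maxn (rho i) (rho j))%N.

Section Step.
Variable m : nat.
Hypothesis IH : forall i j, (mu i j < m)%N -> E i j = 0.

Lemma step_lower i j : mu i j = m -> (rho i < rho j)%N ->
  E i j = (E *m blk 0 E) i j.
Proof.
move=> hm hij; rewrite (idem_entry (p := j)) ?lexx ?ltW ?rho_ltE // mulmx_blk0r.
rewrite [X in _ + X]big1 ?addr0 // => l /rho_lt hl; rewrite IH ?mul0r //.
by move: hm (rho_bound i); rewrite /mu; nia.
Qed.

Lemma step_upper i j : mu i j = m -> (rho j < rho i)%N ->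
  E i j = (blk 0 E *m E) i j.
Proof.
move=> hm hij; rewrite (idem_entry (p := i)) ?lexx ?ltW ?rho_ltE // mulmx_blk0l.
rewrite [X in _ + X]big1 ?addr0 // => l /rho_lt hl.
rewrite (IH (i := l) (j := j)) ?mulr0 //.
by move: hm (rho_bound j); rewrite /mu; nia.
Qed.

Lemma step_diag i j : mu i j = m -> rho i = rho j ->
  E i j = (blk 0 E *m blk 0 E) i j.
Proof.
move=> hm hij; have lij := rho_eqE hij.
rewrite (idem_entry (p := i)) ?lij // mulmx_blk0l.
rewrite [X in _ + X]big1 ?addr0 => [|l /rho_lt hl]; last first.
  by rewrite IH ?mul0r //; move: hm (rho_bound i); rewrite /mu; nia.
apply: eq_bigr => l /eqP hl; rewrite blk0E hl.
by move/eqP: lij; rewrite -eq_level => ->.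
Qed.

End Step.

Lemma graded_idem_eq0 : blk 0 E *m blk 0 E = 0 -> E = 0.
Proof.
move=> dd; suff H m i j : (mu i j < m)%N -> E i j = 0.
  by apply/matrixP => i j; rewrite mxE (H (mu i j).+1).
elim: m i j => [//|m IH] i j.
rewrite ltnS leq_eqVlt => /predU1P[hm|]; last exact: IH.
case: (ltngtP (rho i) (rho j)) => h.
- rewrite (step_lower IH hm h) mxE.
  transitivity ((E *m blk 0 E *m blk 0 E) i j).
    2: by rewrite -mulmxA dd mulmx0 mxE.
  rewrite [RHS]mxE; apply: eq_bigr => l _; rewrite blk0E.
  case: (eqVneq (row l A) (row j A)) => e; last by rewrite !mulr0.
  have rl : rho l = rho j by rewrite /rho (eq_level_row e).
  by rewrite -(step_lower IH (i := i) (j := l)) ?rl // -hm /mu rl.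
- rewrite (step_upper IH hm h) mxE.
  transitivity ((blk 0 E *m (blk 0 E *m E)) i j).
    2: by rewrite mulmxA dd mul0mx mxE.
  rewrite [RHS]mxE; apply: eq_bigr => l _; rewrite blk0E.
  case: (eqVneq (row i A) (row l A)) => e; last by rewrite !mul0r.
  have rl : rho l = rho i by rewrite /rho (eq_level_row e).
  by rewrite -(step_upper IH (i := l) (j := j)) ?rl // -hm /mu rl.
- by rewrite (step_diag IH hm h) dd mxE.
Qed.

Lemma graded_idem_trace_eq0 (L : 'M[F]_n.+1) :
  (forall X, blockdiag X -> L *m X = X *m L) ->
  \tr (L *m blk 0 E) = 0 ->
  (forall X, blockdiag X -> X *m X = X -> X != 0 -> \tr (L *m X) != 0) ->
  E = 0.
Proof.
move=> Lcomm trLd hL; apply: graded_idem_eq0; rewrite mulmxE.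
have bd_d := blockdiag_blk0 E.
apply: (nilpotent_defect_sqr0 (L := L)).
- by rewrite /GRing.comm -!mulmxE Lcomm.
- by rewrite -!mulmxE blk0_defect detour_sqr0.
- by rewrite -mulmxE.
- move=> p; rewrite -!mulmxE; exact: hL (blockdiag_horner p bd_d).
Qed.

End Idempotent.
End GradedIdempotents.

Section Conjugation.
Variables (F : fieldType) (m : nat) (P : 'M[F]_m).
Hypothesis P_unit : P \in unitmx.

Lemma conjM X Y :
  (P *m X *m invmx P) *m (P *m Y *m invmx P) = P *m (X *m Y) *m invmx P.
Proof. by rewrite !mulmxA -(mulmxA _ (invmx P) P) mulVmx // mulmx1. Qed.

Lemma conjK X : invmx P *m (P *m X *m invmx P) *m P = X.
Proof. by rewrite !mulmxA mulVmx // mul1mx -mulmxA mulVmx // mulmx1. Qed.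

Lemma conjVK X : P *m (invmx P *m X *m P) *m invmx P = X.
Proof. by rewrite !mulmxA mulmxV // mul1mx -mulmxA mulmxV // mulmx1. Qed.

Lemma conj_eq0 X : (P *m X *m invmx P == 0) = (X == 0).
Proof.
apply/eqP/eqP => [h|->]; last by rewrite mulmx0 mul0mx.
by rewrite -(conjK X) h mulmx0 mul0mx.
Qed.

Lemma mxtrace_conj X : \tr (P *m X *m invmx P) = \tr X.
Proof. by rewrite mxtrace_mulC mulmxA mulVmx // mul1mx. Qed.

End Conjugation.

(* A diagonal matrix whose entries are constant on weight classes commutes
   with M_0; this applies to the torus elements in the diagonalizing basis. *)
Lemma diag_blockdiag_comm (F : fieldType) (n r : nat) (A : 'M[int]_(n.+1, r))
    (delta : 'rV[F]_n.+1) (X : 'M[F]_n.+1) :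
  (forall i j, row i A = row j A -> delta 0 i = delta 0 j) ->
  blockdiag A X -> diag_mx delta *m X = X *m diag_mx delta.
Proof.
move=> hdelta bX; apply/matrixP => i j; rewrite mul_diag_mx mul_mx_diag !mxE.
case: (eqVneq (row i A) (row j A)) => h; last by rewrite bX // mulr0 mul0r.
by rewrite mulrC (hdelta _ _ h).
Qed.

(* Main theorem: reduce to an idempotent of V and apply the trace criterion
   in the basis diagonalizing the torus. *)
Theorem theorem2p1 (F : fieldType) (n r : nat)
  (P : 'M[F]_n.+1) (A : 'M[int]_(n.+1, r))
  (hP : P \in unitmx)
  (hA : exists C : 'M[int]_(n.+1, r), C^T *m A = 1%:M)
  (c : 'rV[rat]_r)
  (hf : forall w, is_weight A w -> w != 0 -> fval c w != 0)
  (t : 'rV[F]_r) (ht : forall j, t 0 j != 0)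
  (hLam : forall e : 'M[F]_n.+1, wproj P A 0 e = e -> e *m e = e -> e != 0 ->
          \tr (torus_elt P A t *m e) != 0)
  (V : {vspace 'M[F]_n.+1})
  (hV : forall x, x \in V -> \tr (torus_elt P A t *m x) = 0)
  (hV0 : forall x, x \in V -> \tr (torus_elt P A t *m wproj P A 0 x) = 0)
  (hVW : forall w w', Wplus A c w -> Wplus A c w' ->
          forall x y, x \in V -> y \in V ->
          wproj P A w x *m wproj P A (- w') y = 0) :
  mathieu_subspace (fun x : 'M[F]_n.+1 => x \in V).
Proof.
move=> a b b' a_pow.
have [N [e [eV e_idem a_nil]]] := fitting_idempotent a_pow.
suff e0 : e = 0 by exists N => m /subnK <-; rewrite exprD a_nil // !mulr0 mul0r mem0v.
pose D := diag_mx (\row_i \prod_(j < r) (t 0 j) ^ (A i j)).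
have wprojE w x : wproj P A w x = P *m blk A w (invmx P *m x *m P) *m invmx P by [].
rewrite -(conjVK hP e); apply/eqP; rewrite conj_eq0 //; apply/eqP.
apply: (@graded_idem_trace_eq0 _ _ _ _ _ hf _ _ _ D).
- rewrite !mulmxA -(mulmxA (invmx P *m e) P) mulmxV // mulmx1.
  by rewrite -(mulmxA _ e e) mulmxE e_idem.
- move=> w w' hw hw'; apply/eqP; rewrite -(conj_eq0 hP) -conjM // -!wprojE.
  by rewrite hVW.
- move=> X; apply: diag_blockdiag_comm => i j /rowP eij; rewrite !mxE.
  by apply: eq_bigr => k _; have := eij k; rewrite !mxE => ->.
- by rewrite -(mxtrace_conj hP) -conjM // -wprojE hV0.
- move=> X bX X_idem X0; rewrite -(mxtrace_conj hP) -conjM //.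
  apply: hLam; first by rewrite wprojE conjK // blk0_id.
    by rewrite conjM // X_idem.
  by rewrite conj_eq0.
Qed.
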